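(* Let $f:\{0,1\}^n\to\{0,1\}$ be symmetric and suppose there is $a\in\{0,1\}^n$ with $1\le|a|\le n-1$ such that $f(x)=f(x+a)$ for all $x\in\{0,1\}^n$. If $|a|$ is odd, then $f$ is constant. If $|a|$ is even, then $f$ is constant, PARITY, or the negation of PARITY.
   Context: $f$ is symmetric if $f(x)$ depends only on the Hamming weight $|x|$. Addition of bit strings is bitwise mod 2. $\mathrm{PARITY}(x)=1$ iff $|x|$ is odd. *)

From mathcomp Require Import all_boot.
Set Implicit Arguments. Unset Strict Implicit. Unset Printing Implicit Defensive.

Definition hweight (n : nat) (x : n.-tuple bool) : nat := count id x.

Definition bxor (n : nat) (x y : n.-tuple bool) : n.-tuple bool :=
  [tuple of map (fun p => addb p.1 p.2) (zip x y)].

Definition symmetric_fun (n : nat) (f : n.-tuple bool -> bool) : Prop :=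
  forall x y : n.-tuple bool, hweight x = hweight y -> f x = f y.

Definition parity (n : nat) (x : n.-tuple bool) : bool := odd (hweight x).

From mathcomp Require Import all_boot.
From mathcomp Require Import zify.

(* Write w = |a|.  Adding a to x flips the bits of x on the
   support of a, so |x + a| = |x| - 2|x ∩ a| + w.
   (1) Weight shift: for every m with m + 2 <= n, f is equal on weights m and
       m + 2.  Take z with p ones on the support of a and q ones off it, where
       w - p + q = m; moving one of its ones from the support to outside gives
       z' with |z'| = |z| but |z' + a| = m + 2.  Hence, by symmetry and
       invariance under + a,  f(weight m) = f(z + a) = f z = f z'
       = f(z' + a) = f(weight m + 2).  Here 1 <= w <= n - 1 is used.
   (2) Iterating (1), f x depends only on the parity of |x|.
   (3) Since |x + a| ≡ |x| + w (mod 2), an odd w relates the two parity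
       classes and f is constant; for even w, f is a function of PARITY,
       hence constant, PARITY, or its negation. *)

Fixpoint fill (a : seq bool) (p q : nat) : seq bool :=
  match a with
  | [::] => [::]
  | true :: a' => (0 < p) :: fill a' p.-1 q
  | false :: a' => (0 < q) :: fill a' p q.-1
  end.

Lemma size_fill (a : seq bool) (p q : nat) : size (fill a p q) = size a.
Proof. by elim: a p q => [|[] a IH] p q //=; rewrite IH. Qed.

Lemma count_fill (a : seq bool) (p q : nat) :
  count id (fill a p q) = minn p (count id a) + minn q (count negb a).
Proof.
elim: a p q => [|[] a IH] p q /=; first by rewrite !minn0.
- by rewrite IH; case: p => [|p] /=; lia.
- by rewrite IH; case: q => [|q] /=; lia.
Qed.

Lemma count_fill_xor (a : seq bool) (p q : nat) :
  count id [seq x.1 (+) x.2 | x <- zip (fill a p q) a] =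
  (count id a - minn p (count id a)) + minn q (count negb a).
Proof.
elim: a p q => [|[] a IH] p q /=; first by rewrite !minn0.
- by rewrite IH; case: p => [|p] /=; lia.
- by rewrite IH; case: q => [|q] /=; rewrite ?addbF; lia.
Qed.

Lemma odd_count_xor (s t : seq bool) : size s = size t ->
  odd (count id [seq x.1 (+) x.2 | x <- zip s t]) =
  odd (count id s) (+) odd (count id t).
Proof.
elim: s t => [|b s IH] [|c t] //= [/IH].
by rewrite !oddD => ->; case: b; case: c; rewrite /= ?addbN ?addNb ?negbK.
Qed.

Lemma hweight_le {n : nat} (x : n.-tuple bool) : hweight x <= n.
Proof. by rewrite /hweight -{2}(size_tuple x) count_size. Qed.

Lemma odd_hweight_bxor {n : nat} (x y : n.-tuple bool) :
  odd (hweight (bxor x y)) = odd (hweight x) (+) odd (hweight y).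
Proof. by rewrite /hweight /bxor /= odd_count_xor // !size_tuple. Qed.

Lemma exists_hweight (n k : nat) : k <= n -> exists x : n.-tuple bool, hweight x = k.
Proof.
move=> le_kn.
have sz : size (nseq k true ++ nseq (n - k) false) == n.
  by rewrite size_cat !size_nseq subnKC.
by exists (Tuple sz); rewrite /hweight /= count_cat !count_nseq /= mul1n mul0n addn0.
Qed.

Section FixedShift.

Context {n : nat} {f : n.-tuple bool -> bool} (a : n.-tuple bool).
Hypothesis f_sym : symmetric_fun f.
Hypothesis a_weight : 1 <= hweight a <= n - 1.
Hypothesis f_shift : forall x : n.-tuple bool, f x = f (bxor x a).

Let w := hweight a.

Lemma fill_tupleP (p q : nat) : size (fill a p q) == n.
Proof. by rewrite size_fill size_tuple. Qed.

Definition fill_tuple (p q : nat) : n.-tuple bool := Tuple (fill_tupleP p q).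

Lemma count_negb_a : count negb a = n - w.
Proof.
by rewrite -[in RHS](size_tuple a) -(count_predC id a) addKn.
Qed.

Lemma hweight_fill (p q : nat) :
  hweight (fill_tuple p q) = minn p w + minn q (n - w).
Proof. by rewrite /hweight /= count_fill count_negb_a. Qed.

Lemma hweight_fill_xor (p q : nat) :
  hweight (bxor (fill_tuple p q) a) = (w - minn p w) + minn q (n - w).
Proof. by rewrite /hweight /bxor /= count_fill_xor count_negb_a. Qed.

Lemma f_weight_step (m : nat) (x y : n.-tuple bool) :
  m + 2 <= n -> hweight x = m -> hweight y = m + 2 -> f x = f y.
Proof.
move=> le_mn wx wy; have w_le := hweight_le a.
have [p [q [p_gt0 le_pw lt_q wpq]]] :
    exists p q, [/\ 1 <= p, p <= w, q + 1 <= n - w & w - p + q = m].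
  case: (leqP (w - 1) m) => Hm.
  - by exists 1, (m + 1 - w); split; rewrite /w in Hm *; lia.
  - by exists (w - m), 0; split; rewrite /w in Hm *; lia.
pose z := fill_tuple p q; pose z' := fill_tuple p.-1 q.+1.
have fxz : f x = f z.
  by rewrite (f_shift z); apply: f_sym; rewrite hweight_fill_xor; lia.
have fzz' : f z = f z' by apply: f_sym; rewrite !hweight_fill; lia.
have fz'y : f z' = f y.
  by rewrite (f_shift z'); apply: f_sym; rewrite hweight_fill_xor; lia.
by rewrite fxz fzz' fz'y.
Qed.

Lemma f_parity_invariant (x y : n.-tuple bool) :
  odd (hweight x) = odd (hweight y) -> f x = f y.
Proof.
wlog le_xy : x y / hweight x <= hweight y.
  move=> IH eq_odd; case: (leqP (hweight x) (hweight y)) => [|/ltnW] le_weights.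
  - exact: IH.
  - by symmetry; apply: IH.
move=> eq_odd.
have climb d : forall v, hweight v = hweight x + d.*2 -> f x = f v.
  elim: d => [|d IH] v wv; first by apply: f_sym; rewrite wv addn0.
  have le_n := hweight_le v.
  have [|z wz] := exists_hweight n (hweight x + d.*2); first by lia.
  rewrite (IH z wz); apply: (f_weight_step (hweight x + d.*2)) => //; lia.
apply: (climb (hweight y - hweight x)./2).
have even_diff : odd (hweight y - hweight x) = false.
  by rewrite oddB // eq_odd addbb.
by rewrite halfK even_diff subn0; lia.
Qed.

End FixedShift.

Lemma parity_fun_cases {n : nat} (f : n.-tuple bool -> bool) (g : bool -> bool) :
  (forall x, f x = g (parity x)) ->
  (exists c : bool, forall x, f x = c) \/
  (forall x, f x = parity x) \/
  (forall x, f x = ~~ parity x).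
Proof.
move=> fg; case E0: (g false); case E1: (g true).
- by left; exists true => x; rewrite fg; case: parity.
- by right; right => x; rewrite fg; case: parity.
- by right; left => x; rewrite fg; case: parity.
- by left; exists false => x; rewrite fg; case: parity.
Qed.

Theorem lemma7p8 (n : nat) (f : n.-tuple bool -> bool) (a : n.-tuple bool) :
  symmetric_fun f ->
  1 <= hweight a <= n - 1 ->
  (forall x : n.-tuple bool, f x = f (bxor x a)) ->
  (odd (hweight a) -> exists c : bool, forall x, f x = c) /\
  (~~ odd (hweight a) ->
     (exists c : bool, forall x, f x = c) \/
     (forall x, f x = parity x) \/
     (forall x, f x = ~~ parity x)).
Proof.
move=> f_sym a_weight f_shift.
have f_par := f_parity_invariant a f_sym a_weight f_shift.
split=> [odd_a | _].
- exists (f a) => x.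
  have [same | differ] := boolP (odd (hweight x) == odd (hweight a)).
  + exact/f_par/eqP.
  + rewrite f_shift; apply: f_par.
    by move: differ; rewrite odd_hweight_bxor odd_a; case: (odd (hweight x)).
- have [e0 w0] := exists_hweight _ _ (leq0n n).
  have [|e1 w1] := exists_hweight n 1; first by case/andP: a_weight; lia.
  apply: (parity_fun_cases f (fun b => f (if b then e1 else e0))) => x.
  by apply: f_par; rewrite /parity; case: odd; rewrite ?w0 ?w1.
Qed.
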